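(* Let $\mathcal G$ be an ADMG with vertex set $\mathbf V$ and let $\mathbf A,\mathbf Y\subseteq\mathbf V$ be disjoint, such that $\mathbf V\subseteq\mathrm{an}_{\mathcal G}(\mathbf Y)$, $\mathbf V\setminus\mathrm{an}_{\mathcal G_{\mathbf V\setminus\mathbf A}}(\mathbf Y)\subseteq\mathbf A$, (1) for every $\mathbf S\in\mathcal D(\mathcal G_{\mathbf V\setminus\mathbf A})$, $(\mathrm{pa}_{\mathcal G}(\mathbf S)\setminus\mathbf S)\cap\mathbf D_{\mathbf S}=\emptyset$, and (2) for all $\mathbf S_1,\mathbf S_2\in\mathcal D(\mathcal G_{\mathbf V\setminus\mathbf A})$, $\mathbf D_{\mathbf S_1}\cap\mathbf D_{\mathbf S_2}\neq\emptyset$ implies $\mathbf S_1=\mathbf S_2$. Fix $\mathbf a\in\mathfrak X_{\mathbf A}$. Then there exist a DAG $\mathcal G^\dagger$ with vertex set $\mathbf V$, a set $\boldsymbol\alpha$ of edges of $\mathcal G^\dagger$ and an edge intervention $\eta_{\mathfrak a_{\boldsymbol\alpha}}$ such that $p(\mathbf Y(\mathfrak a_{\boldsymbol\alpha}))$ is identified under the multiple worlds model (MWM) for $\mathcal G^\dagger$ via the margin onto $\mathbf Y$ of the edge g-formula $$p(\mathbf V(\mathfrak a_{\boldsymbol\alpha})=\mathbf v)=\prod_{V\in\mathbf V}p\big(V=\mathbf v_V\mid \mathbf v_{\mathrm{pa}^{\overline{\boldsymbol\alpha}}_{\mathcal G^\dagger}(V)},\mathfrak a_{\{(WV)\in\boldsymbol\alpha\}}\big),$$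 and this margin is equal to the identifying g-functional for $p(\mathbf Y(\mathbf a))$ in terms of $p(\mathbf V)$ in $\mathcal G$, namely $$\sum_{\mathbf v_{\mathbf V\setminus(\mathbf Y\cup\mathbf A_f)}}\prod_{V\in\mathbf V\setminus\mathbf A_f}p\Big((\mathbf y\cup\mathbf v)_V\ \Big|\ \mathbf a_{\mathrm{pre}_{\prec}(V)\cap(\mathbf A\setminus\mathbf D_V)},(\mathbf y\cup\mathbf v)_{\mathrm{pre}_{\prec}(V)\setminus(\mathbf A\setminus\mathbf D_V)}\Big).$$
   Context: An acyclic directed mixed graph (ADMG) is a graph with directed and bidirected edges and no directed cycles; it represents hidden-variable DAGs via latent projection (for a DAG on $\mathbf V\cup\mathbf L$: $V\to W$ iff there is a directed path from $V$ to $W$ with all intermediate vertices in $\mathbf L$; $V\leftrightarrow W$ iff there is a path between them with arrowheads into both endpoints and all intermediate vertices non-colliders in $\mathbf L$). $\mathcal G_{\mathbf B}$ is the induced subgraph on $\mathbf B$; $\mathrm{an}$ denotes ancestors (inclusive); districts are connected components of the bidirected part, $\mathcal D(\cdot)$ the set of districts, $\mathrm{dis}_{\mathcal G}(\mathbf S)$ the district containing $\mathbf S$. For $\mathbf S\in\mathcal D(\mathcal G_{\mathbf V\setminus\mathbf A})$, $\mathbf D_{\mathbf S}=\mathrm{dis}_{\mathcal G_{\mathrm{an}_{\mathcal G}(\mathbf S)}}(\mathbf S)$; $\mathbf A_f=\mathbf A\setminus\bigcup_{\mathbf S}\mathbf D_{\mathbf S}$; for $V\in\mathbf V\setminus\mathbf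 A_f$, $\mathbf D_V$ is the unique $\mathbf D_{\mathbf S}$ containing $V$. $\prec$ is a topological order of $\mathcal G$ and $\mathrm{pre}_\prec(V)=\{W\ne V:W\prec V\}$. For a DAG, the multiple worlds model (MWM) is the set of causal structures (collections of one-step potential outcomes $V(\mathbf b)$, $\mathbf b\in\mathfrak X_{\mathrm{pa}(V)}$, with a joint distribution) in which the sets $\{V(\mathbf b):\mathbf b\}$, $V\in\mathbf V$, are mutually independent. Edge interventions: for a set $\boldsymbol\alpha$ of directed edges, $\mathfrak a_{\boldsymbol\alpha}$ assigns to each edge a value of its source; responses are defined recursively by $V(\mathfrak a)=V(\mathfrak a_{\{(WV)\in\boldsymbol\alpha\}},\{W(\mathfrak a):W\in\mathrm{pa}^{\overline{\boldsymbol\alpha}}(V)\})$, with $\mathrm{pa}^{\overline{\boldsymbol\alpha}}(V)=\{W\in\mathrm{pa}(V):(WV)\notin\boldsymbol\alpha\}$. *)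

From HB Require Import structures.
From mathcomp Require Import all_boot all_order all_algebra.
Set Implicit Arguments. Unset Strict Implicit. Unset Printing Implicit Defensive.
Import Order.TTheory GRing.Theory Num.Theory.
Local Open Scope ring_scope.

Section Graphs.
Variable V : finType.

(* A graph on V is given by a directed-edge relation [de] (de w v <=> w -> v)
   and, for ADMGs, a bidirected-edge relation [bi]. *)
Definition acyclic (de : rel V) : Prop :=
  forall w v, de w v -> ~~ connect de v w.

Definition is_DAG (de : rel V) : Prop := acyclic de.

Definition is_ADMG (de bi : rel V) : Prop :=
  [/\ acyclic de, (forall v w, bi v w = bi w v) & (forall v, ~~ bi v v)].

Definition induced (e : rel V) (B : {set V}) : rel V :=
  [rel x y | [&& e x y, x \in B & y \in B]].

Definition anc (e : rel V) (S : {set V}) : {set V} :=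
  [set w | [exists s in S, connect e w s]].

(* pa(S) (not removing S) *)
Definition pa (de : rel V) (S : {set V}) : {set V} :=
  [set w | [exists s in S, de w s]].

Definition dis (bi : rel V) (B : {set V}) (x : V) : {set V} :=
  [set y in B | connect (induced bi B) x y].

Definition districts (bi : rel V) (B : {set V}) : {set {set V}} :=
  [set dis bi B x | x in B].

(* D_S = dis_{G_{an_G(S)}}(S): the district of G_{an_G(S)} containing S
   (written as the union of the districts of the elements of S, which is
   that district whenever S is bidirected-connected, as for S a district
   of G_{V \ A}). *)
Definition DS (de bi : rel V) (S : {set V}) : {set V} :=
  \bigcup_(x in S) dis bi (anc de S) x.

Definition Af (de bi : rel V) (A : {set V}) : {set V} :=
  A :\: \bigcup_(S in districts bi (~: A)) DS de bi S.

(* D_V: the unique D_S containing v (unique under hypothesis (2));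
   written as the union of all D_S containing v. *)
Definition DV (de bi : rel V) (A : {set V}) (v : V) : {set V} :=
  \bigcup_(S in districts bi (~: A) | v \in DS de bi S) DS de bi S.

End Graphs.

Section Prob.
Variables (V : finType) (X : V -> finType) (R : realFieldType).

Definition Cfg := {dffun forall v : V, X v}.

Definition agree (S : {set V}) (x y : Cfg) : bool :=
  [forall v in S, x v == y v].

Definition is_distr (p : Cfg -> R) : Prop :=
  (forall x, 0 <= p x) /\ \sum_(x : Cfg) p x = 1.

Definition is_pos_distr (p : Cfg -> R) : Prop :=
  (forall x, 0 < p x) /\ \sum_(x : Cfg) p x = 1.

Definition Prob (p : Cfg -> R) (E : pred Cfg) : R := \sum_(x | E x) p x.

Definition cond (p : Cfg -> R) (E F : pred Cfg) : R :=
  Prob p (predI E F) / Prob p F.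

(* ea w v is the value (of w) assigned to the edge w -> v, used iff al w v *)
Definition edge_gformula (gd al : rel V) (ea : forall w v : V, X w)
    (p : Cfg -> R) (v : Cfg) : R :=
  \prod_(u : V)
    cond p [pred x : Cfg | x u == v u]
           [pred x : Cfg | [forall w, gd w u ==>
               (x w == if al w u then ea w u else v w)]].

Definition margin (Y : {set V}) (q : Cfg -> R) (y : Cfg) : R :=
  \sum_(x | agree Y x y) q x.

(* rk is the rank function of the topological order: pre(u) = {w | rk w < rk u} *)
Definition gfunctional (de bi : rel V) (rk : V -> nat) (A Y : {set V})
    (a : Cfg) (p : Cfg -> R) (y : Cfg) : R :=
  let Af := Af de bi A in
  \sum_(z : Cfg | agree (Y :|: Af) z y)
    \prod_(u in ~: Af)
      cond p [pred x : Cfg | x u == z u]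
             [pred x : Cfg | [forall w, (rk w < rk u)%N ==>
                 (x w == if w \in A :\: DV de bi A u then a w else z w)]].

Definition PaCfg (gd : rel V) (v : V) :=
  {dffun forall w : {w : V | gd w v}, X (val w)}.
(* the collection (v(b))_{b in X_{pa(v)}} *)
Definition Resp (gd : rel V) (v : V) := {ffun PaCfg gd v -> X v}.
(* joint value of all one-step potential outcomes *)
Definition Omega (gd : rel V) := {dffun forall v : V, Resp gd v}.

Definition pacfg (gd : rel V) (v : V) (f : forall w : V, X w) : PaCfg gd v :=
  [ffun w : {w : V | gd w v} => f (val w)].

Definition marg (gd : rel V) (mu : Omega gd -> R) (v : V) (r : Resp gd v) : R :=
  \sum_(om : Omega gd | om v == r) mu om.
Arguments marg {gd} mu v r.

(* multiple worlds model: the families {v(b) : b}, v in V, are mutually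
   independent (joint pmf = product of the marginal pmfs) *)
Definition MWM (gd : rel V) (mu : Omega gd -> R) : Prop :=
  [/\ forall om, 0 <= mu om, \sum_(om : Omega gd) mu om = 1
    & forall om, mu om = \prod_(v : V) marg mu v (om v)].

(* om realizes V(a_al) = x : for every v,
   x_v = v(a_{al into v}, x_{pa^{not al}(v)})  (recursive definition;
   the solution is unique as gd is acyclic) *)
Definition solves (gd al : rel V) (ea : forall w v : V, X w)
    (om : Omega gd) (x : Cfg) : bool :=
  [forall v, x v == om v (pacfg gd v (fun w => if al w v then ea w v else x w))].

Definition cf (gd al : rel V) (ea : forall w v : V, X w)
    (mu : Omega gd -> R) (x : Cfg) : R :=
  \sum_(om : Omega gd | solves al ea om x) mu om.

Definition obs (gd : rel V) (mu : Omega gd -> R) (x : Cfg) : R :=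
  \sum_(om : Omega gd |
          [forall v, x v == om v (pacfg gd v (fun w => x w))]) mu om.

End Prob.

From HB Require Import structures.
From mathcomp Require Import all_boot all_order all_algebra.
Set Implicit Arguments. Unset Strict Implicit. Unset Printing Implicit Defensive.
Import Order.TTheory GRing.Theory Num.Theory.
Local Open Scope ring_scope.

(* Take for the DAG the complete one along the topological order, and for
   alpha the edges W -> V with W in A \ D_V, all set to a.  Under the multiple
   worlds model the factual law is the product of the laws of the response
   functions, so its marginal on every prefix of the order is the product of
   the corresponding factors; hence each conditional of the edge g-formula is
   the law of a response function, and the formula computes p(V(a_alpha)).
   Every vertex of A_f lies in A \ D_V for every V, so it is intervened on in
   every factor but its own, and its own factor is a conditional distribution
   summing to one: summing A_f out of the edge g-formula leaves the
   g-functional. *)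

Section Configurations.
Variables (I : finType) (T : I -> finType).

Definition upd (x : Cfg T) (s : I) (c : T s) : Cfg T := [ffun j => dfwith x c j].
Arguments upd x s c : clear implicits.

Lemma upd_same x s c : upd x s c s = c.
Proof. by rewrite ffunE dfwith_in. Qed.

Lemma upd_other x s c j : s != j -> upd x s c j = x j.
Proof. by move=> sj; rewrite ffunE dfwith_out. Qed.

Lemma upd_upd x s c c' : upd (upd x s c) s c' = upd x s c'.
Proof.
apply/ffunP=> j; case: (eqVneq s j) => [<-|sj]; first by rewrite !upd_same.
by rewrite !upd_other.
Qed.

Lemma upd_id x s : upd x s (x s) = x.
Proof.
apply/ffunP=> j; case: (eqVneq s j) => [<-|sj]; first by rewrite upd_same.
by rewrite upd_other.
Qed.

Lemma agreeT (x d : Cfg T) : agree [set: I] x d = (x == d).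
Proof.
apply/forallP/eqP => [h|->]; last by move=> v; rewrite eqxx implybT.
by apply/ffunP => v; apply/eqP; apply: (implyP (h v)); rewrite inE.
Qed.

Lemma agreeU (S1 S2 : {set I}) (x d : Cfg T) :
  agree (S1 :|: S2) x d = agree S1 x d && agree S2 x d.
Proof.
apply/forallP/andP => [h|[/forallP h1 /forallP h2] v].
  by split; apply/forallP => v; apply/implyP => vS; apply: (implyP (h v));
    rewrite inE vS ?orbT.
by rewrite inE; apply/implyP => /orP[] vS;
  [exact: (implyP (h1 v)) | exact: (implyP (h2 v))].
Qed.

Lemma agree1 s (x d : Cfg T) : agree [set s] x d = (x s == d s).
Proof.
apply/forallP/idP => [/(_ s)|/eqP xs v]; first by rewrite set11.
by rewrite inE; apply/implyP => /eqP ->; rewrite xs.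
Qed.

Lemma agreeC (S : {set I}) (x d : Cfg T) :
  agree S x d && agree (~: S) x d = (x == d).
Proof. by rewrite -agreeU setUCr agreeT. Qed.

Lemma agree_upd (S : {set I}) (x d : Cfg T) s c : s \notin S ->
  agree S (upd x s c) d = agree S x d.
Proof.
move=> sS; apply: eq_forallb => w; case: (boolP (w \in S)) => //= wS.
by rewrite upd_other //; apply: contraNneq sS => ->.
Qed.

End Configurations.
Arguments upd {I T} x s c.

Section Elimination.
Variables (I : finType) (T : I -> finType) (R : comPzRingType).

Definition ignores (f : Cfg T -> R) (s : I) := forall x c, f (upd x s c) = f x.

Lemma sum_partition_coord (P : pred (Cfg T)) s d (F : Cfg T -> R) :
  (forall x c, P (upd x s c) = P x) ->
  \sum_(x | P x) F x = \sum_(x | P x && (x s == d)) \sum_(c : T s) F (upd x s c).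
Proof.
move=> Ps; rewrite (partition_big (fun x : Cfg T => x s) xpredT) //= exchange_big /=.
apply: eq_bigr => c _.
rewrite (reindex_onto (fun x => upd x s c) (fun x => upd x s d)); last first.
  by move=> x /andP[_ /eqP <-]; rewrite upd_upd upd_id.
apply: eq_bigl => x; rewrite Ps upd_same eqxx andbT upd_upd.
congr (_ && _); apply/eqP/eqP => [<-|<-]; rewrite ?upd_same ?upd_id //.
Qed.

Lemma sum_mul_elim_coord (P : pred (Cfg T)) s d (F G : Cfg T -> R) (sg : R) :
  (forall x c, P (upd x s c) = P x) -> ignores G s ->
  (forall x, \sum_(c : T s) F (upd x s c) = sg) ->
  \sum_(x | P x) F x * G x = (\sum_(x | P x && (x s == d)) G x) * sg.
Proof.
move=> Ps Gs Fs; rewrite [LHS](sum_partition_coord d) // big_distrl /=.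
apply: eq_bigr => x _; rewrite -(Fs x) mulr_sumr.
by apply: eq_bigr => c _; rewrite Gs mulrC.
Qed.

(* [B] is summed out from the highest rank down: the factor of the top-ranked
   coordinate is the only one depending on it, so its sum [sg] splits off. *)
Lemma sum_prod_elim (rk : I -> nat) (N B : {set I}) (f : I -> Cfg T -> R)
    (sg : I -> R) (d : Cfg T) (P : pred (Cfg T)) :
  [disjoint N & B] ->
  (forall s x c, s \in B -> P (upd x s c) = P x) ->
  (forall s v, s \in B -> v \in N -> ignores (f v) s) ->
  (forall s v, s \in B -> v \in B -> s != v -> (rk v <= rk s)%N ->
     ignores (f v) s) ->
  (forall s x, s \in B -> \sum_(c : T s) f s (upd x s c) = sg s) ->
  \sum_(x | P x) \prod_(v | (v \in N) || (v \in B)) f v x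
  = (\sum_(x | P x && agree B x d) \prod_(v in N) f v x) * \prod_(s in B) sg s.
Proof.
elim: {B}_.+1 {-2}B (ltnSn #|B|) P => // n IH B cardB P dNB PB fN fB sumf.
have [B0 | [s0 s0B]] := set_0Vmem B.
  rewrite B0 big_set0 mulr1; apply: eq_big => [x|x _].
    by rewrite /agree; case: (P x) => //=; apply/esym/forallP => v; rewrite inE.
  by apply: eq_bigl => v; rewrite inE orbF.
pose s := [arg max_(s > s0 in B) rk s].
have [sB smax] : s \in B /\ forall v, v \in B -> (rk v <= rk s)%N.
  by rewrite /s; case: arg_maxnP.
have sN : s \notin N by rewrite (disjointFl dNB sB).
pose B' := B :\ s.
have prodE x : \prod_(v | (v \in N) || (v \in B)) f v x
    = f s x * \prod_(v | (v \in N) || (v \in B')) f v x.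
  rewrite (bigD1 s) /= ?sB ?orbT //; congr (_ * _); apply: eq_bigl => v.
  rewrite /B' !inE.
  by case: (eqVneq v s) => [->|]; rewrite ?(negbTE sN) ?andbT ?andbF.
have ignore_s : ignores (fun x => \prod_(v | (v \in N) || (v \in B')) f v x) s.
  move=> x c; apply: eq_bigr => v /orP[vN|]; first exact: fN.
  by rewrite /B' !inE => /andP[vs vB]; apply: fB; rewrite 1?eq_sym ?smax.
rewrite (eq_bigr _ (fun x _ => prodE x)).
rewrite (sum_mul_elim_coord (d s) (fun x c => PB s x c sB) ignore_s (sumf s ^~ sB)).
rewrite (IH B') //; first last.
- by move=> s1 x /setD1P[_ s1B]; apply: sumf.
- by move=> s1 v /setD1P[_ s1B] /setD1P[_ vB]; apply: fB.
- by move=> s1 v /setD1P[_ s1B]; apply: fN.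
- by move=> s1 x c /setD1P[s1s s1B] /=; rewrite PB // upd_other // eq_sym.
- by apply: disjointWr dNB; rewrite subsetDl.
- by rewrite (cardsD1 s B) sB in cardB.
rewrite (bigD1 s sB) /= -mulrA [sg s * _]mulrC; congr (_ * (_ * _)).
  apply: eq_bigl => x; rewrite -andbA; congr (_ && _).
  by rewrite -[in RHS](setD1K sB) agreeU agree1.
by apply: eq_bigl => v; rewrite /B' !inE andbC.
Qed.

Lemma sum_prod_dffun (Pr : forall i, pred (T i)) (g : forall i, T i -> R)
    (d : Cfg T) :
  \sum_(x : Cfg T | [forall i, Pr i (x i)]) \prod_i g i (x i)
  = \prod_i \sum_(c | Pr i c) g i c.
Proof.
pose f i (x : Cfg T) := if Pr i (x i) then g i (x i) else 0.
have disj : [disjoint set0 & [set: I]] by rewrite disjoints_subset sub0set.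
have fN s v : s \in [set: I] -> v \in set0 -> ignores (f v) s.
  by move=> _; rewrite inE.
have fB s v : s \in [set: I] -> v \in [set: I] -> s != v -> (0 <= 0)%N ->
    ignores (f v) s.
  by move=> _ _ sv _ x c; rewrite /f upd_other.
have sumf s x : s \in [set: I] -> \sum_c f s (upd x s c) = \sum_(c | Pr s c) g s c.
  by move=> _; rewrite [RHS]big_mkcond; apply: eq_bigr => c _; rewrite /f upd_same.
have := sum_prod_elim (P := predT) d disj (fun _ _ _ _ => erefl) fN fB sumf.
rewrite (eq_bigl (pred1 d) _ (fun x => agreeT x d)) big_pred1_eq !big_set0 mul1r.
rewrite (eq_bigl predT) => [<-|v]; last by rewrite inE.
rewrite big_mkcond; apply: eq_bigr => x _.
case: (boolP [forall i, Pr i (x i)]) => [/forallP h|/forallPn[i hi]].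
  by apply: eq_big => [v|v _]; rewrite ?inE // /f h.
by rewrite (bigD1 i) ?inE //= /f (negbTE hi) mul0r.
Qed.

End Elimination.

Section Conditioning.
Variables (V : finType) (X : V -> finType) (R : realFieldType).
Implicit Types (p : Cfg X -> R) (E F : pred (Cfg X)).

Lemma eq_cond p E E' F F' : E =1 E' -> F =1 F' -> cond p E F = cond p E' F'.
Proof.
move=> eqE eqF; rewrite /cond /Prob; congr (_ / _); apply: eq_bigl => x /=.
  by rewrite eqE eqF.
by rewrite eqF.
Qed.

Lemma Prob_neq0 p F x0 : (forall x, 0 < p x) -> F x0 -> Prob p F != 0.
Proof.
move=> p_gt0 Fx0; rewrite /Prob (bigD1 x0) //= lt0r_neq0 // ltr_pwDl //.
by apply: sumr_ge0 => x _; apply: ltW.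
Qed.

Lemma sum_cond_coord p F s :
  Prob p F != 0 -> \sum_(c : X s) cond p [pred x : Cfg X | x s == c] F = 1.
Proof.
move=> F_neq0; rewrite /cond -mulr_suml.
suff -> : \sum_(c : X s) Prob p (predI [pred x : Cfg X | x s == c] F) = Prob p F.
  exact: divff.
rewrite /Prob (partition_big (fun x : Cfg X => x s) xpredT) //=.
by apply: eq_bigr => c _; apply: eq_bigl => x /=; rewrite andbC.
Qed.

End Conditioning.

Section MultipleWorlds.
Variables (V : finType) (X : V -> finType) (R : realFieldType) (gd : rel V).
Variables (mu : Omega X gd -> R).
Hypothesis mu_MWM : MWM mu.

Definition resp_prob v (b : PaCfg X gd v) (c : X v) : R :=
  \sum_(r : Resp X gd v | r b == c) marg mu r.

Definition obs_factor v (x : Cfg X) : R :=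
  resp_prob (pacfg gd v (fun w => x w)) (x v).

Lemma sum_marg v : \sum_(r : Resp X gd v) marg mu r = 1.
Proof.
case: mu_MWM => _ <- _.
by rewrite [RHS](partition_big (fun om : Omega X gd => om v) xpredT).
Qed.

Lemma sum_resp_prob v (b : PaCfg X gd v) : \sum_(c : X v) resp_prob b c = 1.
Proof.
by rewrite -(sum_marg v) [RHS](partition_big (fun r : Resp X gd v => r b) xpredT).
Qed.

Lemma prob_responses (b : forall v, PaCfg X gd v) (x : Cfg X) :
  \sum_(om : Omega X gd | [forall v, x v == om v (b v)]) mu om
  = \prod_v resp_prob (b v) (x v).
Proof.
case: mu_MWM => _ _ mu_prod; rewrite (eq_bigr _ (fun om _ => mu_prod om)).
rewrite (sum_prod_dffun (fun v (r : Resp X gd v) => x v == r (b v))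
  (fun v r => marg mu r)
  [ffun v => [ffun=> x v]]).
by apply: eq_bigr => v _; apply: eq_bigl => r; rewrite eq_sym.
Qed.

Lemma obs_prod x : obs mu x = \prod_v obs_factor v x.
Proof. exact: prob_responses. Qed.

Lemma pacfg_upd v (x : Cfg X) s c : (forall w, gd w v -> w != s) ->
  pacfg gd v (fun w => upd x s c w) = pacfg gd v (fun w => x w).
Proof.
move=> h; apply/ffunP => w; rewrite !ffunE dfwith_out //.
by rewrite eq_sym; apply: h; case: w.
Qed.

Lemma ignores_obs_factor v s :
  (forall w, gd w v -> w != s) -> s != v -> ignores (obs_factor v) s.
Proof. by move=> h sv x c; rewrite /obs_factor pacfg_upd // upd_other. Qed.

Variable rk : V -> nat.
Hypothesis gd_rk : forall w v, gd w v -> (rk w < rk v)%N.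

Lemma obs_prefix k (d : Cfg X) :
  \sum_(x | agree [set w | (rk w < k)%N] x d) obs mu x
  = \prod_(v | (rk v < k)%N) obs_factor v d.
Proof.
set N := [set w | (rk w < k)%N].
have disj : [disjoint N & ~: N] by rewrite disjoints_subset setCK.
have agreeN s x c : s \in ~: N -> agree N (upd x s c) d = agree N x d.
  by rewrite inE => sN; apply: agree_upd.
have fN s v : s \in ~: N -> v \in N -> ignores (obs_factor v) s.
  rewrite !inE -leqNgt => sN vN; apply: ignores_obs_factor.
    move=> w /gd_rk wv; apply: contraTneq sN => <-.
    by rewrite -ltnNge (ltn_trans wv).
  by apply: contraTneq sN => ->; rewrite -ltnNge.
have fB s v : s \in ~: N -> v \in ~: N -> s != v -> (rk v <= rk s)%N ->
    ignores (obs_factor v) s.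
  move=> _ _ sv vs; apply: ignores_obs_factor => // w /gd_rk wv.
  by apply: contraTneq vs => <-; rewrite -ltnNge.
have sumf s x : s \in ~: N -> \sum_c obs_factor s (upd x s c) = 1.
  move=> _; rewrite -(sum_resp_prob (pacfg gd s (fun w => x w))).
  apply: eq_bigr => c _; rewrite /obs_factor pacfg_upd ?upd_same //.
  by move=> w /gd_rk; apply: contraTneq => ->; rewrite ltnn.
have := sum_prod_elim d disj agreeN fN fB sumf.
rewrite big1_eq mulr1 (eq_bigl (pred1 d) _ (fun x => agreeC N x d)) big_pred1_eq.
rewrite (eq_bigl (fun v => (rk v < k)%N)) => [<-|v]; last by rewrite inE.
apply: eq_bigr => x _; rewrite obs_prod.
by apply: eq_bigl => v; rewrite [v \in ~: N]inE orbN.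
Qed.

End MultipleWorlds.

Definition rank_dag (V : finType) (rk : V -> nat) : rel V :=
  fun w v => (rk w < rk v)%N.

Lemma rank_dag_acyclic (V : finType) (rk : V -> nat) : is_DAG (rank_dag rk).
Proof.
have rk_path q (v : V) : path (rank_dag rk) v q -> (rk v <= rk (last v q))%N.
  elim: q v => [|z q IH] v //= /andP[vz /IH]; exact/leq_trans/ltnW.
move=> w v /= wv; apply/negP => /connectP[q /rk_path + vw].
by rewrite -vw => /(leq_trans wv); rewrite ltnn.
Qed.

Section CompleteDag.
Variables (V : finType) (X : V -> finType) (R : realFieldType) (rk : V -> nat).
Hypothesis rk_inj : injective rk.
Variable mu : Omega X (rank_dag rk) -> R.
Hypothesis mu_MWM : MWM mu.
Hypothesis obs_gt0 : forall x, 0 < obs mu x.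

Lemma obs_cond_factor u (d : Cfg X) :
  cond (obs mu) [pred x : Cfg X | x u == d u]
                [pred x : Cfg X | agree [set w | (rk w < rk u)%N] x d]
  = obs_factor mu u d.
Proof.
set pre := [set w | (rk w < rk u)%N].
have preU : [set w | (rk w < (rk u).+1)%N] = u |: pre.
  apply/setP => w; rewrite !inE ltnS leq_eqVlt (inj_eq rk_inj).
  by case: (eqVneq w u) => [->|]; rewrite ?ltnn.
have den : Prob (obs mu) [pred x : Cfg X | agree pre x d]
    = \prod_(v | (rk v < rk u)%N) obs_factor mu v d.
  exact: (obs_prefix mu_MWM (rk := rk) (fun w v => id)).
have num : Prob (obs mu)
      (predI [pred x : Cfg X | x u == d u] [pred x : Cfg X | agree pre x d])
    = obs_factor mu u d * \prod_(v | (rk v < rk u)%N) obs_factor mu v d.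
  have predE (x : Cfg X) : (x u == d u) && agree pre x d
                 = agree [set w | (rk w < (rk u).+1)%N] x d.
    by rewrite preU agreeU agree1.
  rewrite /Prob (eq_bigl _ _ predE) (obs_prefix mu_MWM (rk := rk) (fun w v => id)) (bigD1 u) //=.
  congr (_ * _); apply: eq_bigl => v; rewrite ltnS leq_eqVlt (inj_eq rk_inj).
  by case: (eqVneq v u) => [->|]; rewrite ?eqxx ?ltnn ?andbT.
rewrite /cond num den mulfK // -den.
by apply: (Prob_neq0 (x0 := d) obs_gt0); apply/forallP => w; rewrite eqxx implybT.
Qed.

Lemma cf_edge_gformula (al : rel V) (ea : forall w v : V, X w) (x : Cfg X) :
  cf al ea mu x = edge_gformula (rank_dag rk) al ea (obs mu) x.
Proof.
rewrite /cf (prob_responses mu_MWM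
  (fun v => pacfg (rank_dag rk) v (fun w => if al w v then ea w v else x w))).
apply: eq_bigr => u _.
have rkD w : (rk w < rk u)%N -> u != w by apply: contraTneq => ->; rewrite ltnn.
set d := upd [ffun w => if al w u then ea w u else x w] u (x u).
have -> : resp_prob mu (pacfg (rank_dag rk) u
                          (fun w => if al w u then ea w u else x w)) (x u)
        = obs_factor mu u d.
  rewrite /obs_factor upd_same; congr resp_prob.
  by apply/ffunP => -[w wu]; rewrite !ffunE /= dfwith_out ?ffunE //; apply: rkD.
rewrite -obs_cond_factor; apply: eq_cond => x' /=; first by rewrite upd_same.
apply: eq_forallb => w; rewrite /rank_dag inE.
by case: (ltnP (rk w) (rk u)) => /= [/rkD uw|_]; rewrite ?upd_other ?ffunE.
Qed.

End CompleteDag.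

Section EdgeFactor.
Variables (V : finType) (X : V -> finType) (R : realFieldType).
Variables (gd al : rel V) (ea : forall w v : V, X w) (p : Cfg X -> R).

Definition edge_factor u (x : Cfg X) : R :=
  cond p [pred x' : Cfg X | x' u == x u]
         [pred x' : Cfg X | [forall w, gd w u ==>
             (x' w == if al w u then ea w u else x w)]].

Lemma edge_gformulaE x : edge_gformula gd al ea p x = \prod_u edge_factor u x.
Proof. by []. Qed.

Lemma ignores_edge_factor u s :
  (gd s u -> al s u) -> s != u -> ignores (edge_factor u) s.
Proof.
move=> s_fixed su x c; apply: eq_cond => x' /=; first by rewrite upd_other.
apply: eq_forallb => w; case: (eqVneq s w) => [<-|sw]; last by rewrite upd_other.
by case: (boolP (gd s u)) => //= /s_fixed ->.
Qed.

Lemma sum_edge_factor s (x : Cfg X) : (forall x, 0 < p x) -> ~~ gd s s ->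
  \sum_(c : X s) edge_factor s (upd x s c) = 1.
Proof.
move=> p_gt0 gd_ss.
pose F := [pred x' : Cfg X | [forall w, gd w s ==>
             (x' w == if al w s then ea w s else x w)]].
have F_neq0 : Prob p F != 0.
  apply: (Prob_neq0 (x0 := [ffun w => if al w s then ea w s else x w]) p_gt0).
  by apply/forallP => w /=; rewrite ffunE eqxx implybT.
rewrite -(sum_cond_coord s F_neq0).
apply: eq_bigr => c _; apply: eq_cond => x' /=; first by rewrite upd_same.
apply: eq_forallb => w; case: (eqVneq s w) => [<-|sw]; last by rewrite upd_other.
by rewrite (negbTE gd_ss).
Qed.

End EdgeFactor.

Definition gformula_edges (V : finType) (de bi : rel V) (rk : V -> nat)
    (A : {set V}) : rel V :=
  fun w v => (rk w < rk v)%N && (w \in A :\: DV de bi A v).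

Lemma Af_subD_DV (V : finType) (de bi : rel V) (A : {set V}) v :
  Af de bi A \subset A :\: DV de bi A v.
Proof.
apply/subsetP => s; rewrite /Af /DV !inE => /andP[nU ->]; rewrite andbT.
apply: contra nU => /bigcupP[S /andP[SD _] sS]; apply/bigcupP; exists S => //.
Qed.

Section GFunctional.
Variables (V : finType) (X : V -> finType) (R : realFieldType).
Variables (de bi : rel V) (rk : V -> nat) (A Y : {set V}) (a : Cfg X).
Hypothesis AY : [disjoint A & Y].
Variable p : Cfg X -> R.
Hypothesis p_gt0 : forall x, 0 < p x.

Local Notation al := (gformula_edges de bi rk A).
Local Notation ea := (fun (w : V) (_ : V) => a w).
Local Notation F := (edge_factor (rank_dag rk) al ea p).

Lemma margin_edge_gformula y :
  margin Y (edge_gformula (rank_dag rk) al ea p) y = gfunctional de bi rk A Y a p y.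
Proof.
set B := Af de bi A.
have disj : [disjoint ~: B & B] by rewrite disjoints_subset.
have BY s : s \in B -> s \notin Y.
  by move=> sB; rewrite (disjointFr AY) //; apply: subsetP (subsetDl _ _) s sB.
have agreeY s x c : s \in B -> agree Y (upd x s c) y = agree Y x y.
  by move=> /BY; apply: agree_upd.
have F_ignores s v : s \in B -> s != v -> ignores (F v) s.
  move=> sB; apply: ignores_edge_factor => svu; apply/andP; split => //.
  exact: subsetP (Af_subD_DV de bi A v) s sB.
have fN s v : s \in B -> v \in ~: B -> ignores (F v) s.
  move=> sB vB; apply: F_ignores => //.
  by apply: contraTneq vB => <-; rewrite inE sB.
have fB s v : s \in B -> v \in B -> s != v -> (0 <= 0)%N -> ignores (F v) s.
  by move=> sB _ sv _; apply: F_ignores.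
have sumF s x : s \in B -> \sum_c F s (upd x s c) = 1.
  by move=> _; apply: sum_edge_factor => //; rewrite /rank_dag ltnn.
have := sum_prod_elim y disj agreeY fN fB sumF.
rewrite big1_eq mulr1 => elim_B.
rewrite /margin (eq_bigr _ (fun x _ => edge_gformulaE _ _ _ _ x)).
transitivity (\sum_(x | agree Y x y) \prod_(v | (v \in ~: B) || (v \in B)) F v x).
  by apply: eq_bigr => x _; apply: eq_bigl => v; rewrite [v \in ~: B]inE orNb.
rewrite elim_B; apply: eq_big => [z|z _]; first by rewrite agreeU.
apply: eq_bigr => u _; apply: eq_cond => x' //=; apply: eq_forallb => w.
by rewrite /rank_dag /gformula_edges; case: ltnP.
Qed.

End GFunctional.

Theorem lemma19 (V : finType) (X : V -> finType) (R : realFieldType)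
  (de bi : rel V) (A Y : {set V}) (rk : V -> nat) (a : Cfg X) :
  is_ADMG de bi ->
  [disjoint A & Y] ->
  injective rk -> (forall w v, de w v -> (rk w < rk v)%N) ->
  anc de Y = [set: V] ->
  [set: V] :\: anc (induced de (~: A)) Y \subset A ->
  (forall S, S \in districts bi (~: A) ->
     (pa de S :\: S) :&: DS de bi S = set0) ->
  (forall S1 S2, S1 \in districts bi (~: A) -> S2 \in districts bi (~: A) ->
     DS de bi S1 :&: DS de bi S2 != set0 -> S1 = S2) ->
  exists (gd al : rel V) (ea : forall w v : V, X w),
    [/\ is_DAG gd,
        (forall w v, al w v -> gd w v),
        (forall mu : Omega X gd -> R, MWM mu ->
           (forall x, 0 < obs mu x) ->
           forall y : Cfg X,
             margin Y (cf al ea mu) y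
             = margin Y (edge_gformula gd al ea (obs mu)) y)
      & (forall p : Cfg X -> R, is_pos_distr p ->
           forall y : Cfg X,
             margin Y (edge_gformula gd al ea p) y
             = gfunctional de bi rk A Y a p y)].
Proof.
(* The structural hypotheses on G are what make the g-functional identify
   p(Y(a)) in G itself; the two identities stated here do not need them. *)
move=> _ AY rk_inj _ _ _ _ _.
exists (rank_dag rk), (gformula_edges de bi rk A), (fun w _ => a w); split.
- exact: rank_dag_acyclic.
- by move=> w v /andP[].
- by move=> mu mu_MWM obs_gt0 y; apply: eq_bigr => x _; apply: cf_edge_gformula.
- by move=> p [p_gt0 _] y; apply: margin_edge_gformula.
Qed.
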